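(* Let $m\ge 9$ be an integer and $g=\lceil\log_2 m\rceil$. For each integer $k$ with $m/g\le k\le m$, let $b_k$ be the number of integer sequences $0=x_0<x_1<\dots<x_k\le x_{k+1}=m$ such that $\max_{1\le i\le k+1}(x_i-x_{i-1})\le g$. Then for every real number $z\ge 2$, $$\Big(1-\big(\tfrac{2}{z+1}\big)^{g}\Big)(z+1)^m\le\sum_{k=\lceil m/g\rceil}^{m} b_k z^k\le (z+1)^m.$$ *)

From HB Require Import structures.
From mathcomp Require Import all_boot all_order all_algebra.
Set Implicit Arguments. Unset Strict Implicit. Unset Printing Implicit Defensive.
Import Order.TTheory GRing.Theory Num.Theory.

(* g = ceil(log_2 m): the smallest e with m <= 2^e *)
Definition gpar (m : nat) : nat := up_log 2 m.

Definition ceil_div (a b : nat) : nat := (a + b.-1) %/ b.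

(* A k-tuple (x_1,...,x_k) with entries in {0..m} is admissible when
   0 = x_0 < x_1 < ... < x_k  (x_k <= m automatic, x_{k+1} = m)
   and every gap x_i - x_{i-1} (1 <= i <= k+1) is at most g. *)
Definition admissible (m g k : nat) (t : k.-tuple 'I_m.+1) : bool :=
  let xs := [seq val i | i <- t] in
  path ltn 0 xs && path (fun a b => b <= a + g) 0 (rcons xs m).

Definition bk (m g k : nat) : nat := #|[pred t : k.-tuple 'I_m.+1 | admissible g t]|.

From HB Require Import structures.
From mathcomp Require Import all_boot all_order all_algebra.
From mathcomp Require Import zify ring lra.
Set Implicit Arguments. Unset Strict Implicit. Unset Printing Implicit Defensive.
Import Order.TTheory GRing.Theory Num.Theory.

(* Identify the sequences counted by b_k with k-subsets of {1..m}. Such a subset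
   fails to be admissible only if it misses some window (j, j+g] of [1, m]; there
   are m - g windows, each with m - g points outside it, hence
   C(m,k) - (m-g) C(m-g,k) <= b_k <= C(m,k), and summing against z^k,
   (z+1)^m - (m-g)(z+1)^(m-g) <= sum_k b_k z^k <= (z+1)^m.
   Below k = ceil(m/g) only k = ceil(m/g) - 1 contributes (otherwise some gap
   exceeds g), and there b_k <= g^k <= g 2^(m-g-k) because g <= 2^(g-2), so this
   term is at most g (z+1)^(m-g). Since m <= 2^g, the lower bound follows. *)

Lemma leq_card_bigcup (I T : finType) (P : pred I) (F : I -> {set T}) :
  #|\bigcup_(i | P i) F i| <= \sum_(i | P i) #|F i|.
Proof.
elim/big_rec2: _ => [|i n U _ IH]; first by rewrite cards0.
by apply: leq_trans (leq_card_setU _ _) _; rewrite leq_add2l.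
Qed.

Lemma sorted_enum_ord n (A : {set 'I_n}) : sorted ltn (map val (enum A)).
Proof.
rewrite -[enum _](eq_filter (mem_enum _)) -(eq_filter (mem_map val_inj _)).
by rewrite -filter_map (sorted_filter ltn_trans) // unlock val_ord_enum iota_ltn_sorted.
Qed.

Lemma card_sorted_tuples n k (P : pred (seq nat)) :
  #|[set t : k.-tuple 'I_n.+1 | sorted ltn (map val t) && P (map val t)]| =
  #|[set A : {set 'I_n.+1} | (#|A| == k) && P (map val (enum A))]|.
Proof.
pose set_of (t : k.-tuple 'I_n.+1) := [set i in t].
pose tuple_of (A : {set 'I_n.+1}) := [tuple of mkseq (nth ord0 (enum A)) k].
have tuple_ofE (A : {set 'I_n.+1}) : #|A| = k -> val (tuple_of A) = enum A.
  by move=> cardA; rewrite -[enum _](mkseq_nth ord0) -cardE cardA.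
rewrite -!sum1dep_card (reindex_onto set_of tuple_of) /= => [|A]; last first.
  case/andP=> /eqP cardA _; apply/setP=> x.
  by rewrite inE -(mem_enum A) -tuple_ofE.
apply: eq_bigl => t; apply/idP/idP => [/andP[sorted_t Pt]|]; last first.
  by case/andP=> /andP[/eqP cardA PA] /eqP <-; rewrite tuple_ofE // sorted_enum_ord.
have enum_set_of : map val (enum (set_of t)) = map val t.
  apply: (irr_sorted_eq ltn_trans ltnn) => // [|y]; first exact: sorted_enum_ord.
  by apply/mapP/mapP=> [] [x t_x ->]; exists x; rewrite // mem_enum inE in t_x *.
have card_set_of : #|set_of t| = k.
  by rewrite cardE -(size_map val) enum_set_of size_map size_tuple.
rewrite card_set_of eqxx enum_set_of Pt -val_eqE tuple_ofE //=.
by apply/eqP/(inj_map val_inj).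
Qed.

Definition admissible_seq (m g : nat) (xs : seq nat) : bool :=
  path ltn 0 xs && path (fun a b => b <= a + g) 0 (rcons xs m).

Lemma bk_card_sets m g k : bk m g k =
  #|[set A : {set 'I_m.+1} | (#|A| == k) && admissible_seq m g (map val (enum A))]|.
Proof.
rewrite -card_sorted_tuples cardsE; apply: eq_card => t; rewrite !inE.
by apply/idP/andP => [adm_t|[_ //]]; split=> //; case/andP: adm_t => /path_sorted.
Qed.

Lemma path_ltn0_enum m (A : {set 'I_m.+1}) :
  path ltn 0 (map val (enum A)) = (A \subset [set~ ord0]).
Proof.
rewrite path_sortedE ?sorted_enum_ord ?andbT; last exact: ltn_trans.
apply/allP/subsetP => [pos_A x xA | A_nz _ /mapP[x xA ->]].
  by rewrite !inE -val_eqE -lt0n; apply: pos_A; rewrite map_f ?mem_enum.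
by rewrite mem_enum in xA; move: (A_nz x xA); rewrite !inE -val_eqE /= -lt0n.
Qed.

Lemma card_ksubsets_nonzero m k :
  #|[set A : {set 'I_m.+1} | A \subset [set~ ord0] & #|A| == k]| = 'C(m, k).
Proof. by rewrite cards_draws cardsC1 card_ord. Qed.

Lemma bk_le_binomial m g k : bk m g k <= 'C(m, k).
Proof.
rewrite bk_card_sets -card_ksubsets_nonzero; apply/subset_leq_card/subsetP => A.
by rewrite !inE -path_ltn0_enum andbC => /andP[/andP[-> _] ->].
Qed.

Lemma exists_empty_window g m x0 xs :
  path ltn x0 xs -> all (leq^~ m) xs ->
  ~~ path (fun a b => b <= a + g) x0 (rcons xs m) ->
  exists j, [/\ x0 <= j, j + g < m & {in xs, forall x, ~~ (j < x <= j + g)}].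
Proof.
elim: xs x0 => [|y ys IH] x0 /=.
  by rewrite andbT -ltnNge => _ _ gap; exists x0.
case/andP=> x0y ys_path /andP[ym ys_m]; rewrite negb_and => /orP[gap|].
  exists x0; split; rewrite ?leqnn //; first by lia.
  move=> x; rewrite inE => /predU1P[-> | x_ys]; first by lia.
  by move/allP/(_ x x_ys): (order_path_min ltn_trans ys_path); lia.
case/(IH y ys_path ys_m) => j [yj jm empty_j]; exists j; split => //; first by lia.
by move=> x; rewrite inE => /predU1P[->|/empty_j //]; lia.
Qed.

Definition window m g j : {set 'I_m.+1} := [set x : 'I_m.+1 | j < x <= j + g].

Lemma card_window m g j : j + g <= m -> g <= #|window m g j|.
Proof.
move=> jgm; pose f (i : 'I_g) : 'I_m.+1 := inord (j + i.+1).
have f_val (i : 'I_g) : f i = j + i.+1 :> nat.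
  by rewrite inordK //; have := ltn_ord i; lia.
have f_inj : injective f.
  by move=> a b /(congr1 val) /=; rewrite !f_val => /addnI [/val_inj].
rewrite -[X in X <= _]card_ord -(card_imset _ f_inj); apply/subset_leq_card/subsetP.
by move=> _ /imsetP[i _ ->]; rewrite inE f_val; have := ltn_ord i; lia.
Qed.

Lemma card_nonzero_outside_window m g j :
  j + g <= m -> #|[set~ ord0] :\: window m g j| <= m - g.
Proof.
move=> jgm; rewrite cardsD cardsC1 card_ord leq_sub2l //.
suff /setIidPr -> : window m g j \subset [set~ ord0] by exact: card_window.
by apply/subsetP => x; rewrite !inE -val_eqE /=; lia.
Qed.

Lemma binomial_le_bk_add m g k : 'C(m, k) <= bk m g k + (m - g) * 'C(m - g, k).
Proof.
rewrite -card_ksubsets_nonzero bk_card_sets.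
set D := [set A : {set _} | A \subset _ & _].
set B := [set A : {set _} | (#|A| == k) && _].
pose Y j := [set A : {set 'I_m.+1} | A \subset [set~ ord0] :\: window m g j & #|A| == k].
have cover : D \subset B :|: \bigcup_(j < m - g) Y j.
  apply/subsetP => A; rewrite !inE => /andP[A_nz cardA].
  rewrite cardA /admissible_seq path_ltn0_enum A_nz /=.
  case adm: path => //=; apply/bigcupP.
  have [||j [_ jgm empty_j]] := exists_empty_window _ _ (negbT adm).
  - by rewrite path_ltn0_enum.
  - by apply/allP => _ /mapP[x _ ->]; rewrite -ltnS.
  have jlt : j < m - g by lia.
  exists (Ordinal jlt) => //; rewrite inE cardA andbT.
  apply/subsetP => x xA; rewrite inE (subsetP A_nz x xA) andbT inE.
  by apply: empty_j; rewrite map_f ?mem_enum.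
apply: leq_trans (subset_leq_card cover) _.
apply: leq_trans (leq_card_setU _ _) _; rewrite leq_add2l.
apply: leq_trans (leq_card_bigcup _ _) _.
rewrite -[X in X * _]card_ord -sum_nat_const; apply: leq_sum => j _.
rewrite cards_draws leq_bin2l // card_nonzero_outside_window //.
by have := ltn_ord j; lia.
Qed.

Lemma gap_path_last_le g x0 xs y :
  path (fun a b => b <= a + g) x0 (rcons xs y) -> y <= x0 + (size xs).+1 * g.
Proof.
elim: xs x0 => [|x xs IH] x0 /=; first by rewrite andbT mul1n.
by case/andP=> x_le /IH; rewrite mulSn; lia.
Qed.

Lemma bk_eq0 m g k : k.+1 * g < m -> bk m g k = 0.
Proof.
move=> short; apply: eq_card0 => t; rewrite unfold_in; apply/negP.
by case/andP=> _ /gap_path_last_le; rewrite size_map size_tuple; lia.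
Qed.

Definition increments (x0 : nat) (xs : seq nat) := pairmap (fun a b => b - a) x0 xs.

Lemma scanl_increments x0 xs : path leq x0 xs -> scanl addn x0 (increments x0 xs) = xs.
Proof.
elim: xs x0 => [|x xs IH] x0 //= /andP[x0x /IH].
by rewrite subnKC // => ->.
Qed.

Lemma increments_bounded g x0 xs y :
  path ltn x0 xs -> path (fun a b => b <= a + g) x0 (rcons xs y) ->
  all (fun d => 0 < d <= g) (increments x0 xs).
Proof.
elim: xs x0 => [|x xs IH] x0 //= /andP[x0x inc] /andP[gap gaps].
by rewrite IH // andbT; lia.
Qed.

Lemma bk_le_expn m g k : 0 < g -> bk m g k <= g ^ k.
Proof.
(* An admissible tuple is determined by its increments, which lie in [1, g]. *)
case: g => // g _.
pose incr (t : k.-tuple 'I_m.+1) := increments 0 (map val t).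
pose F t : {ffun 'I_k -> 'I_g.+1} := [ffun i : 'I_k => inord (nth 0 (incr t) i).-1].
have size_incr t : size (incr t) = k by rewrite size_pairmap size_map size_tuple.
have nth_incr t : admissible g.+1 t -> forall i : 'I_k, nth 0 (incr t) i = (F t i).+1.
  case/andP=> inc gaps i; rewrite ffunE.
  have /allP/(_ (nth 0 (incr t) i)) := increments_bounded inc gaps.
  by rewrite mem_nth ?size_incr // => /(_ isT) /andP[pos le_g]; rewrite inordK prednK.
have -> : g.+1 ^ k = #|{ffun 'I_k -> 'I_g.+1}| by rewrite card_ffun !card_ord.
apply: (@leq_card_in _ _ F) => t1 t2 adm1 adm2 eqF.
have incr_eq : incr t1 = incr t2.
  apply: (@eq_from_nth _ 0) => [|i]; rewrite !size_incr // => ltik.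
  by rewrite (nth_incr t1 adm1 (Ordinal ltik)) (nth_incr t2 adm2 (Ordinal ltik)) eqF.
have path_leq (t : k.-tuple 'I_m.+1) : admissible g.+1 t -> path leq 0 (map val t).
  by case/andP=> inc _; apply: sub_path inc => a b /ltnW.
apply/val_inj/(inj_map val_inj).
rewrite -(scanl_increments (path_leq t1 adm1)) -(scanl_increments (path_leq t2 adm2)).
exact: congr1 incr_eq.
Qed.

Lemma gpar_ge4 m : 9 <= m -> 4 <= gpar m.
Proof.
move=> m_ge9; rewrite ltnNge; apply/negP => g_le3.
have := leq_trans (up_logP m (isT : 1 < 2)) (leq_pexp2l (isT : 0 < 2) g_le3).
by rewrite -/(gpar m); lia.
Qed.

Lemma gpar_lt m : 1 < m -> gpar m < m.
Proof.
move=> m_gt1; have := up_log_gtn (isT : 1 < 2) m_gt1; rewrite -/(gpar m).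
by case: (gpar m) => [/ltnW | g /=]; last exact: leq_ltn_trans (ltn_expl g _).
Qed.

Lemma ltn_ceil_div m g k : 0 < g -> (k < ceil_div m g) = (k * g < m).
Proof. by move=> g_gt0; rewrite /ceil_div leq_divRL // mulSn; apply/idP/idP; lia. Qed.

Lemma leq_exp2_subn2 n : 4 <= n -> n <= 2 ^ (n - 2).
Proof.
elim: n => // n IH; rewrite leq_eqVlt => /predU1P[<- // | n_ge4].
have -> : n.+1 - 2 = (n - 2).+1 by lia.
by rewrite expnS; have := IH n_ge4; lia.
Qed.

Lemma expn_le_mul_exp2 g K m :
  4 <= g -> K.+1 * g < m -> g ^ K.+1 <= g * 2 ^ (m - g - K.+1).
Proof.
move=> g_ge4 Kg_lt; rewrite expnS leq_mul2l; apply/orP; right.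
have gK_le : g ^ K <= (2 ^ (g - 2)) ^ K.
  by elim: K {Kg_lt} => // K IH; rewrite !expnS leq_mul ?leq_exp2_subn2.
by apply: leq_trans gK_le _; rewrite -expnM leq_exp2l //; nia.
Qed.

Local Open Scope ring_scope.

Section BkSeries.
Variables (R : realFieldType) (z : R).
Hypothesis z_ge0 : 0 <= z.

Lemma exprD1n_nat n N : (n <= N)%N ->
  (z + 1) ^+ n = \sum_(0 <= k < N.+1) 'C(n, k)%:R * z ^+ k.
Proof.
move=> le_nN; rewrite exprD1n (big_ord_widen N.+1 (fun k => z ^+ k *+ 'C(n, k))) //.
rewrite big_mkcond big_mkord; apply: eq_bigr => k _.
by case: ltnP => [_ | /bin_small ->]; rewrite ?mulr_natl ?mul0r.
Qed.

Lemma bk_series_le m g :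
  \sum_(0 <= k < m.+1) (bk m g k)%:R * z ^+ k <= (z + 1) ^+ m.
Proof.
rewrite (exprD1n_nat (leqnn m)); apply: ler_sum => k _.
by rewrite ler_wpM2r ?exprn_ge0 // ler_nat bk_le_binomial.
Qed.

Lemma expr_le_bk_series_add m g :
  (z + 1) ^+ m <= \sum_(0 <= k < m.+1) (bk m g k)%:R * z ^+ k
                   + (m - g)%:R * (z + 1) ^+ (m - g).
Proof.
rewrite (exprD1n_nat (leqnn m)) (exprD1n_nat (leq_subr g m)) mulr_sumr -big_split /=.
apply: ler_sum => k _; rewrite mulrA -mulrDl ler_wpM2r ?exprn_ge0 //.
by rewrite -natrM -natrD ler_nat binomial_le_bk_add.
Qed.

Lemma bk_series_head_le m g : 1 <= z -> (4 <= g)%N -> (g < m)%N ->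
  \sum_(0 <= k < ceil_div m g) (bk m g k)%:R * z ^+ k <= g%:R * (z + 1) ^+ (m - g).
Proof.
move=> z_ge1 g_ge4 g_lt_m; have g_gt0 : (0 < g)%N by lia.
have : (1 < ceil_div m g)%N by rewrite ltn_ceil_div // mul1n.
case def_c: ceil_div => [|[|K]] // _.
have Kg_lt : (K.+1 * g < m)%N by rewrite -ltn_ceil_div // def_c.
rewrite big_nat_recr //= big1_seq ?add0r => [|k]; last first.
  by rewrite mem_iota => /andP[_ lt_kK]; rewrite bk_eq0 ?mul0r //; nia.
have -> : (z + 1) ^+ (m - g) = (z + 1) ^+ (m - g - K.+1) * (z + 1) ^+ K.+1.
  by rewrite -exprD subnK //; nia.
apply: le_trans (_ : (g * 2 ^ (m - g - K.+1))%:R * z ^+ K.+1 <= _).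
  rewrite ler_wpM2r ?exprn_ge0 // ler_nat.
  exact: leq_trans (@bk_le_expn m g K.+1 g_gt0) (expn_le_mul_exp2 g_ge4 Kg_lt).
rewrite natrM natrX -mulrA ler_wpM2l // ler_pM ?exprn_ge0 //.
  by rewrite lerXn2r ?nnegrE //; lra.
by rewrite lerXn2r ?nnegrE //; lra.
Qed.

End BkSeries.

Theorem mainTheorem13 (R : realFieldType) (m : nat) (z : R) :
  (9 <= m)%N -> 2 <= z ->
  (1 - (2 / (z + 1)) ^+ gpar m) * (z + 1) ^+ m
    <= \sum_(ceil_div m (gpar m) <= k < m.+1) (bk m (gpar m) k)%:R * z ^+ k
  /\ \sum_(ceil_div m (gpar m) <= k < m.+1) (bk m (gpar m) k)%:R * z ^+ k
    <= (z + 1) ^+ m.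
Proof.
move=> m_ge9 z_ge2; have z_ge0 : 0 <= z by lra.
have z_ge1 : 1 <= z by lra.
set g := gpar m; have g_ge4 : (4 <= g)%N := gpar_ge4 m_ge9.
have g_lt_m : (g < m)%N by apply: gpar_lt; lia.
have m_le : (m%:R : R) <= 2 ^+ g by rewrite -natrX ler_nat up_logP.
have c_le : (ceil_div m g <= m.+1)%N by rewrite leqNgt ltn_ceil_div; nia.
have upper := bk_series_le z_ge0 m g.
have lower := expr_le_bk_series_add z_ge0 m g.
have head := bk_series_head_le z_ge0 z_ge1 g_ge4 g_lt_m.
rewrite (big_cat_nat (leq0n _) c_le) /= in upper lower.
set head_sum := \sum_(0 <= k < _) _ in upper lower head.
have head_ge0 : 0 <= head_sum by apply: sumr_ge0 => k _; rewrite mulr_ge0 ?exprn_ge0.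
set P := (z + 1) ^+ (m - g) in lower head.
have lhsE : (1 - (2 / (z + 1)) ^+ g) * (z + 1) ^+ m = (z + 1) ^+ m - 2 ^+ g * P.
  rewrite -(subnK (ltnW g_lt_m)) exprD expr_div_n /P; field.
  by rewrite expf_neq0 // gt_eqF // ltr_wpDl.
have mP_le : m%:R * P <= 2 ^+ g * P by rewrite ler_wpM2r // exprn_ge0 // addr_ge0.
rewrite natrB ?mulrBl in lower; last exact: ltnW.
by rewrite lhsE; split; lra.
Qed.
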